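(* In the Banach space $C^0([0,1])$ of continuous real functions on $[0,1]$ with the supremum norm, the set of functions which are not completely non-Hölder is meagre (i.e. of first Baire category).
   Context: For $\alpha>0$, a function $g:[0,1]\to\mathbb{R}$ is called $\alpha$-Hölder at $x_0$ from the right if $\limsup_{y\searrow x_0}\frac{|g(y)-g(x_0)|}{|y-x_0|^\alpha}<\infty$, and $\alpha$-Hölder at $x_0$ from the left if $\limsup_{y\nearrow x_0}\frac{|g(y)-g(x_0)|}{|y-x_0|^\alpha}<\infty$. The function $g$ is called completely non-Hölder if there is no $x_0\in[0,1]$ and no $\alpha>0$ such that $g$ is $\alpha$-Hölder at $x_0$ from the left or from the right. *)

From Stdlib Require Import Reals.
Open Scope R_scope.

Definition I01 (x : R) : Prop := 0 <= x <= 1.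

(* f restricted to [0,1] is continuous: f represents an element of C^0([0,1]).
   Values of f outside [0,1] play no role anywhere below. *)
Definition cont01 (f : R -> R) : Prop :=
  forall x, I01 x -> forall eps, 0 < eps ->
    exists delta, 0 < delta /\
      forall y, I01 y -> Rabs (y - x) < delta -> Rabs (f y - f x) < eps.

Definition sup_le (f g : R -> R) (r : R) : Prop :=
  forall x, I01 x -> Rabs (f x - g x) <= r.

(* alpha-Hölder at x0 from the right / left: the limsup of
   |g y - g x0| / |y - x0|^alpha (y -> x0 within [0,1]) is finite,
   i.e. the ratio is bounded on a one-sided punctured neighbourhood. *)
Definition holder_right (g : R -> R) (x0 alpha : R) : Prop :=
  exists C delta, 0 < delta /\
    forall y, I01 y -> x0 < y < x0 + delta ->
      Rabs (g y - g x0) <= C * Rpower (y - x0) alpha.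

Definition holder_left (g : R -> R) (x0 alpha : R) : Prop :=
  exists C delta, 0 < delta /\
    forall y, I01 y -> x0 - delta < y < x0 ->
      Rabs (g y - g x0) <= C * Rpower (x0 - y) alpha.

Definition completely_non_holder (g : R -> R) : Prop :=
  ~ exists x0 alpha, I01 x0 /\ 0 < alpha /\
      ((x0 < 1 /\ holder_right g x0 alpha) \/ (0 < x0 /\ holder_left g x0 alpha)).

(* Topology of C^0([0,1]) with the sup norm. Sets are predicates on R -> R;
   only their members that are continuous on [0,1] matter. *)
Definition in_closure (A : (R -> R) -> Prop) (h : R -> R) : Prop :=
  forall delta, 0 < delta -> exists a, cont01 a /\ A a /\ sup_le h a delta.

Definition nowhere_dense (A : (R -> R) -> Prop) : Prop :=
  ~ exists f eps, cont01 f /\ 0 < eps /\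
      forall h, cont01 h -> sup_le f h eps -> in_closure A h.

Definition meagre (S : (R -> R) -> Prop) : Prop :=
  exists A : nat -> ((R -> R) -> Prop),
    (forall n, nowhere_dense (A n)) /\
    forall f, cont01 f -> S f -> exists n, A n f.

From Stdlib Require Import Reals Lra Lia Classical ZArith.
Open Scope R_scope.

(* The set of functions that are not completely non-Hölder is covered by the
   countable family of "Hölder classes" [holder_class n]: g belongs to class n
   when, at some point x0 of [0,1], |g y - g x0| <= N |y - x0|^(1/N) for all y
   in a one-sided window of length 1/N inside [0,1] ending at x0, where
   N = n + 1.  Any one-sided alpha-Hölder point with constant C and radius
   delta gives such a bound as soon as N dominates |C|, 1/alpha and 1/delta.

   Each class is nowhere dense: given f continuous and eps > 0, the function
   h = f + (eps/2) sin(x/tau) is eps-close to f and, for tau small enough,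
   oscillates by about eps/2 in every window of length 2 pi tau, which beats
   the bound N |y - x0|^(1/N) (small on such windows) and the variation of f
   (small by uniform continuity).  This oscillation survives perturbations of
   size eps/16, so no function eps/16-close to h lies in the class. *)

Lemma multiple_in_window (P v : R) :
  0 < P -> -P < v -> exists k : nat, v < INR k * P <= v + P.
Proof.
  intros HP Hv.
  set (q := v / P).
  assert (Hvq : v = q * P) by (unfold q; field; lra).
  destruct (archimed q) as [Hup1 Hup2].
  assert (Hq : -1 < q) by (apply (Rmult_lt_reg_r P); [exact HP | rewrite <- Hvq; lra]).
  assert (Hz : (0 <= up q)%Z) by (cut (-1 < up q)%Z; [lia | apply lt_IZR; simpl; lra]).
  exists (Z.to_nat (up q)).
  rewrite INR_IZR_INZ, Z2Nat.id by exact Hz.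
  split; nra.
Qed.

Lemma sin_attains_in_window (tau b theta : R) :
  0 < tau -> 0 <= b -> 0 <= theta < 2 * PI ->
  exists y, b < y <= b + 2 * PI * tau /\ sin (y / tau) = sin theta.
Proof.
  intros Htau Hb Htheta.
  destruct (multiple_in_window (2 * PI * tau) (b - theta * tau)) as [k Hk];
    [pose proof PI_RGT_0; nra | nra |].
  exists (theta * tau + INR k * (2 * PI * tau)). split; [lra |].
  replace ((theta * tau + INR k * (2 * PI * tau)) / tau)
    with (theta + 2 * INR k * PI) by (field; lra).
  apply sin_period.
Qed.

Lemma sin_oscillates_in_window (tau b x0 : R) :
  0 < tau -> 0 <= b ->
  exists y, b < y <= b + 2 * PI * tau /\ 1 <= Rabs (sin (y / tau) - sin (x0 / tau)).
Proof.
  intros Htau Hb. pose proof PI_RGT_0.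
  destruct (Rle_lt_dec (sin (x0 / tau)) 0) as [Hs | Hs].
  - destruct (sin_attains_in_window tau b (PI / 2)) as [y [Hy Hsy]]; try lra.
    exists y. rewrite Hsy, sin_PI2. split; [exact Hy | split_Rabs; lra].
  - destruct (sin_attains_in_window tau b (3 * (PI / 2))) as [y [Hy Hsy]]; try lra.
    exists y. rewrite Hsy, sin_3PI2. split; [exact Hy | split_Rabs; lra].
Qed.

Definition clamp01 (x : R) : R := Rmax 0 (Rmin 1 x).

Lemma clamp01_spec (x y : R) :
  I01 x -> I01 (clamp01 y) /\ Rabs (clamp01 y - x) <= Rabs (y - x).
Proof.
  unfold I01, clamp01, Rmax, Rmin; intros Hx.
  repeat destruct Rle_dec; split; try split_Rabs; lra.
Qed.

Lemma clamp01_id (x : R) : I01 x -> clamp01 x = x.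
Proof. unfold I01, clamp01, Rmax, Rmin; intros Hx; repeat destruct Rle_dec; lra. Qed.

(* Heine: a function continuous on [0,1] is uniformly continuous there
   (apply the library version to f composed with the clamp). *)
Lemma cont01_uniform (f : R -> R) : cont01 f ->
  forall e, 0 < e -> exists eta, 0 < eta /\
    forall x y, I01 x -> I01 y -> Rabs (x - y) < eta -> Rabs (f x - f y) < e.
Proof.
  intros Hf e He.
  assert (Hc : forall x, 0 <= x <= 1 -> continuity_pt (fun z => f (clamp01 z)) x).
  { intros x Hx e0 He0. destruct (Hf x Hx e0 He0) as [d [Hd Hd']].
    exists d; split; [exact Hd |]. intros y [_ Hy]. simpl in *. unfold R_dist in *.
    rewrite (clamp01_id x Hx). destruct (clamp01_spec x y Hx) as [H1 H2].
    apply Hd'; [exact H1 | lra]. }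
  destruct (Heine _ _ (compact_P3 0 1) Hc (mkposreal e He)) as [[eta Heta] H].
  exists eta; split; [exact Heta |]. intros x y Hx Hy Hxy.
  rewrite <- (clamp01_id x Hx), <- (clamp01_id y Hy). exact (H x y Hx Hy Hxy).
Qed.

Lemma cont01_of_continuity (g : R -> R) : continuity g -> cont01 g.
Proof.
  intros Hg x _ e He. destruct (Hg x e He) as [d [Hd Hd']].
  exists d; split; [exact Hd |]. intros y _ Hy.
  destruct (Req_dec y x) as [-> | Hne].
  - unfold Rminus; rewrite Rplus_opp_r, Rabs_R0; exact He.
  - apply (Hd' y). split; [split; [exact I | auto] | exact Hy].
Qed.

Lemma cont01_plus (f g : R -> R) :
  cont01 f -> cont01 g -> cont01 (fun x => f x + g x).
Proof.
  intros Hf Hg x Hx e He.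
  destruct (Hf x Hx (e / 2)) as [d1 [Hd1 Hd1']]; [lra |].
  destruct (Hg x Hx (e / 2)) as [d2 [Hd2 Hd2']]; [lra |].
  exists (Rmin d1 d2); split; [apply Rmin_pos; assumption |].
  intros y Hy Hyx. pose proof (Rmin_l d1 d2). pose proof (Rmin_r d1 d2).
  specialize (Hd1' y Hy ltac:(lra)). specialize (Hd2' y Hy ltac:(lra)).
  split_Rabs; lra.
Qed.

Definition level (n : nat) : R := INR n + 1.

Lemma level_inv_bounds (n : nat) : 0 < / level n <= 1.
Proof.
  unfold level. pose proof (pos_INR n). split.
  - apply Rinv_0_lt_compat; lra.
  - rewrite <- Rinv_1. apply Rinv_le_contravar; lra.
Qed.

Lemma level_large (M r : R) : 0 < r -> exists n, M < level n /\ / level n < r.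
Proof.
  intros Hr. destruct (INR_unbounded (Rmax M (/ r))) as [n Hn].
  pose proof (Rmax_l M (/ r)). pose proof (Rmax_r M (/ r)).
  assert (Hlev : INR n < level n) by (unfold level; lra).
  pose proof (pos_INR n).
  exists n. split; [lra |].
  rewrite <- (Rinv_inv r). apply Rinv_lt_contravar; [| lra].
  apply Rmult_lt_0_compat; [apply Rinv_0_lt_compat; exact Hr | lra].
Qed.

Definition holder_window (N : R) (g : R -> R) (x0 a : R) : Prop :=
  forall y, a < y < a + / N ->
    Rabs (g y - g x0) <= N * Rpower (Rabs (y - x0)) (/ N).

Definition holder_class (n : nat) (g : R -> R) : Prop :=
  exists x0 a, 0 <= a /\ a + / level n <= 1 /\
    (x0 = a \/ x0 = a + / level n) /\ holder_window (level n) g x0 a.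

Lemma Rpower_antitone_exponent (t a b : R) :
  0 < t < 1 -> b <= a -> Rpower t a <= Rpower t b.
Proof.
  intros Ht Hab. unfold Rpower.
  assert (Hln : ln t < 0) by (rewrite <- ln_1; apply ln_increasing; lra).
  destruct (Req_dec a b) as [-> | Hne]; [lra |].
  left; apply exp_increasing. nra.
Qed.

Lemma holder_bound_to_level (C al N t v : R) :
  0 < t < 1 -> / N <= al -> Rabs C < N ->
  v <= C * Rpower t al -> v <= N * Rpower t (/ N).
Proof.
  intros Ht Hal HC Hv.
  pose proof (Rpower_antitone_exponent t al (/ N) Ht Hal).
  assert (0 < Rpower t al) by (unfold Rpower; apply exp_pos).
  pose proof (Rle_abs C). pose proof (Rabs_pos C). nra.
Qed.

Lemma not_completely_non_holder_in_class (f : R -> R) :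
  ~ completely_non_holder f -> exists n, holder_class n f.
Proof.
  intros H. apply NNPP in H.
  destruct H as [x0 [al [Hx [Hal [[Hx1 [C [d [Hd Hc]]]] | [Hx1 [C [d [Hd Hc]]]]]]]]];
    unfold I01 in Hx.
  - destruct (level_large (Rabs C) (Rmin (Rmin d al) (1 - x0))) as [n [HC Hr]].
    { repeat apply Rmin_pos; lra. }
    pose proof (Rmin_l (Rmin d al) (1 - x0)). pose proof (Rmin_r (Rmin d al) (1 - x0)).
    pose proof (Rmin_l d al). pose proof (Rmin_r d al). pose proof (level_inv_bounds n).
    exists n, x0, x0. split; [lra | split; [lra | split; [left; reflexivity |]]].
    intros y Hy. rewrite (Rabs_right (y - x0)) by lra.
    apply (holder_bound_to_level C al); try lra.
    apply Hc; unfold I01; lra.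
  - destruct (level_large (Rabs C) (Rmin (Rmin d al) x0)) as [n [HC Hr]].
    { repeat apply Rmin_pos; lra. }
    pose proof (Rmin_l (Rmin d al) x0). pose proof (Rmin_r (Rmin d al) x0).
    pose proof (Rmin_l d al). pose proof (Rmin_r d al). pose proof (level_inv_bounds n).
    exists n, x0, (x0 - / level n).
    split; [lra | split; [lra | split; [right; ring |]]].
    intros y Hy. rewrite (Rabs_left (y - x0)) by lra.
    replace (- (y - x0)) with (x0 - y) by ring.
    apply (holder_bound_to_level C al); try lra.
    apply Hc; unfold I01; lra.
Qed.

(* Arithmetic core of the perturbation: at scales t <= (c/(4N))^N the level-N
   bound is at most c/4, while c S + F with |S| >= 1, |F| < c/8 exceeds 7c/8. *)
Lemma oscillation_beats_level (N c t F S : R) :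
  0 < N -> 0 < c -> 0 < t <= Rpower (c / (4 * N)) N ->
  Rabs F < c / 8 -> 1 <= Rabs S ->
  N * Rpower t (/ N) + 2 * (c / 8) < Rabs (F + c * S).
Proof.
  intros HN Hc Ht HF HS.
  assert (Hbase : 0 < c / (4 * N)) by (apply Rdiv_lt_0_compat; lra).
  assert (Hroot : Rpower t (/ N) <= c / (4 * N)).
  { apply Rle_trans with (Rpower (Rpower (c / (4 * N)) N) (/ N)).
    - apply Rle_Rpower_l; [left; apply Rinv_0_lt_compat; exact HN | exact Ht].
    - rewrite Rpower_mult, Rinv_r, Rpower_1 by lra. lra. }
  assert (Hsmall : N * Rpower t (/ N) <= c / 4).
  { apply Rle_trans with (N * (c / (4 * N))); [apply Rmult_le_compat_l; lra |].
    right; field; lra. }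
  split_Rabs; nra.
Qed.

Lemma gap_points_distinct (g : R -> R) (x y : R) :
  1 <= Rabs (g y - g x) -> 0 < Rabs (y - x).
Proof.
  intros Hgap. apply Rabs_pos_lt. intros Hyx.
  replace y with x in Hgap by lra.
  rewrite Rminus_diag_eq, Rabs_R0 in Hgap by reflexivity. lra.
Qed.

Lemma increment_stable (h a : R -> R) (x y d B : R) :
  sup_le h a d -> I01 x -> I01 y -> B + 2 * d < Rabs (h y - h x) ->
  ~ Rabs (a y - a x) <= B.
Proof.
  intros Hha Hx Hy Hgap.
  pose proof (Hha x Hx). pose proof (Hha y Hy). split_Rabs; lra.
Qed.

Lemma holder_class_nowhere_dense (n : nat) : nowhere_dense (holder_class n).
Proof.
  intros [f [eps [Hf [Heps Hball]]]].
  set (N := level n). set (c := eps / 2).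
  assert (HN : 0 < N) by (unfold N, level; pose proof (pos_INR n); lra).
  assert (HiN : 0 < / N) by (apply Rinv_0_lt_compat; exact HN).
  destruct (cont01_uniform f Hf (c / 8)) as [eta [Heta Hunif]]; [unfold c; lra |].
  set (B := Rpower (c / (4 * N)) N).
  assert (HB : 0 < B) by (unfold B, Rpower; apply exp_pos).
  set (L := Rmin B (Rmin (eta / 2) (/ N / 2))).
  assert (HL : 0 < L) by (repeat apply Rmin_pos; lra).
  assert (HLB : L <= B) by apply Rmin_l.
  assert (HLeta : L < eta) by (pose proof (Rmin_r B (Rmin (eta / 2) (/ N / 2)));
                               pose proof (Rmin_l (eta / 2) (/ N / 2)); unfold L; lra).
  assert (HLN : L < / N) by (pose proof (Rmin_r B (Rmin (eta / 2) (/ N / 2)));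
                             pose proof (Rmin_r (eta / 2) (/ N / 2)); unfold L; lra).
  pose proof PI_RGT_0.
  set (tau := L / (2 * PI)).
  assert (Htau : 0 < tau) by (unfold tau; apply Rdiv_lt_0_compat; lra).
  assert (HtauL : 2 * PI * tau = L) by (unfold tau; field; lra).
  set (h := fun x => f x + c * sin (x / tau)).
  assert (Hh : cont01 h) by (apply cont01_plus; [exact Hf | apply cont01_of_continuity; reg]).
  assert (Hfh : sup_le f h eps).
  { intros x _. unfold h, c. pose proof (SIN_bound (x / tau)). split_Rabs; nra. }
  destruct (Hball h Hh Hfh (c / 8)) as [a [_ [[x0 [w [Hw0 [Hw1 [Hx0 Hwin]]]]] Hha]]];
    [unfold c; lra |].
  change (level n) with N in Hw1, Hx0, Hwin.
  assert (Hy : exists y, w < y < w + / N /\ 0 < Rabs (y - x0) <= L /\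
                         1 <= Rabs (sin (y / tau) - sin (x0 / tau))).
  { destruct Hx0 as [-> | ->].
    - destruct (sin_oscillates_in_window tau w w) as [y [Hy Hs]]; [exact Htau | exact Hw0 |].
      pose proof (gap_points_distinct (fun x => sin (x / tau)) w y Hs).
      rewrite HtauL in Hy. exists y. split; [lra | split; [split_Rabs; lra | exact Hs]].
    - destruct (sin_oscillates_in_window tau (w + / N - L) (w + / N)) as [y [Hy Hs]];
        [exact Htau | lra |].
      pose proof (gap_points_distinct (fun x => sin (x / tau)) (w + / N) y Hs).
      rewrite HtauL in Hy. exists y. split; [split_Rabs; lra | split; [split_Rabs; lra | exact Hs]]. }
  destruct Hy as [y [Hyw [Hyx Hs]]].
  assert (Hx0I : I01 x0) by (destruct Hx0 as [-> | ->]; unfold I01; lra).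
  assert (HyI : I01 y) by (unfold I01; lra).
  apply (increment_stable h a x0 y (c / 8) (N * Rpower (Rabs (y - x0)) (/ N)) Hha Hx0I HyI);
    [| exact (Hwin y Hyw)].
  replace (h y - h x0) with ((f y - f x0) + c * (sin (y / tau) - sin (x0 / tau)))
    by (unfold h; ring).
  apply oscillation_beats_level; [exact HN | unfold c; lra | unfold B in HLB; lra | | exact Hs].
  apply Hunif; [exact HyI | exact Hx0I | lra].
Qed.

Theorem mainTheorem3 :
  meagre (fun f : R -> R => ~ completely_non_holder f).
Proof.
  exists holder_class. split.
  - exact holder_class_nowhere_dense.
  - intros f _ Hf. exact (not_completely_non_holder_in_class f Hf).
Qed.
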